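(* Every binary orchard network $N$ admits an HGT-consistent labelling $t$ with the following additional property: whenever two distinct nodes $a,b$ of $N$ satisfy $t(a)=t(b)$, one of them is a parent of the other, the parent being a tree node and the child being a reticulation.
   Context: A (directed phylogenetic) network on a finite taxa set $X$ is a directed acyclic graph without parallel arcs whose nodes are of the following types: a unique root (indegree 0, outdegree 1); tree nodes (indegree 1, outdegree at least 2); reticulations (indegree at least 2, outdegree 1); leaves (indegree 1, outdegree 0), the leaves being bijectively labelled by $X$. Non-leaf nodes are called internal. A network is binary if every tree node and every reticulation has total degree (indegree plus outdegree) exactly 3. A tree is a network without reticulations. Orchard networks: An ordered pair of leaves $(x,y)$ is a cherry if $x$ and $y$ have a common parent; it is a reticulated cherry if the parent $p_x$ of $x$ is a reticulation and $p_x$ and $y$ have a common parent. Let $p_x,p_y$ be the parents of $x,y$. Reducing $(x,y)$ in a network $N$: if $(x,y)$ is a cherry, delete $x$ and suppress $p_x$ if it now has indegree 1 and outdegree 1; if $(x,y)$ is a reticulated cherry, delete the arc $(p_y,p_x)$ and suppress any resulting node of indegree 1 and outdegree 1; otherwise do nothing. (Suppressing a node $v$ with one parent $u$ and one child $w$ means deleting $v$ and adding the arc $(u,w)$.) For a sequence $S$ of ordered pairs, $NS$ denotes the result of reducing the pairs of $S$ in order. $N$ is orchard if there is a sequence $S$ such that $NS$ is a tree with exactly one leaf. HGT-consistent labelling: Let $N$ be a binary network with node set $V$. An HGT-consistent labelling of $N$ is a map $t:V\to\mathbb{R}$ such that (1) for every arc $(u,v)$, $t(u)\le t(v)$, and equality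 is allowed only if $v$ is a reticulation; (2) every internal node $u$ has a child $v$ with $t(u)<t(v)$; (3) for every reticulation $r$ with parents $u$ and $v$, exactly one of $t(u)=t(r)$ and $t(v)=t(r)$ holds. *)

From mathcomp Require Import all_boot.
From Stdlib Require Import Reals.
Set Implicit Arguments. Unset Strict Implicit. Unset Printing Implicit Defensive.

(* A (possibly partially deleted) directed graph living inside a finite
   universe V of node names: the present nodes and the arc relation. *)
Record net (V : finType) := Net { nodes : {set V}; narc : rel V }.

Section Net.
Variable V : finType.
Implicit Types (N : net V) (u v w x y : V).

Definition indeg N v : nat := #|[set u | narc N u v]|.
Definition outdeg N v : nat := #|[set w | narc N v w]|.

Definition is_root N v : bool :=
  [&& v \in nodes N, indeg N v == 0 & outdeg N v == 1].
Definition is_tree_node N v : bool :=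
  [&& v \in nodes N, indeg N v == 1 & 2 <= outdeg N v].
Definition is_ret N v : bool :=
  [&& v \in nodes N, 2 <= indeg N v & outdeg N v == 1].
Definition is_leaf N v : bool :=
  [&& v \in nodes N, indeg N v == 1 & outdeg N v == 0].

(* Directed phylogenetic network (leaves are identified with their taxa). *)
Definition is_network N : Prop :=
  (forall u v, narc N u v -> u \in nodes N /\ v \in nodes N) /\
  (forall u v, narc N u v -> ~~ connect (narc N) v u) /\
  (forall v, v \in nodes N ->
     [|| is_root N v, is_tree_node N v, is_ret N v | is_leaf N v]) /\
  (exists r, is_root N r /\ forall r', is_root N r' -> r' = r).

Definition binary N : Prop :=
  forall v, is_tree_node N v || is_ret N v -> indeg N v + outdeg N v = 3.

Definition is_tree N : Prop :=
  is_network N /\ forall v, ~~ is_ret N v.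

Definition suppress N v : net V :=
  match [pick u | narc N u v], [pick w | narc N v w] with
  | Some u, Some w =>
      if [&& v \in nodes N, indeg N v == 1 & outdeg N v == 1] then
        Net (nodes N :\ v)
            (fun a b => (narc N a b && (a != v) && (b != v)) || ((a == u) && (b == w)))
      else N
  | _, _ => N
  end.

Definition del_node N x : net V :=
  Net (nodes N :\ x) (fun a b => narc N a b && (a != x) && (b != x)).

Definition del_arc N p q : net V :=
  Net (nodes N) (fun a b => narc N a b && ((a, b) != (p, q))).

Definition parent N x : option V := [pick p | narc N p x].

Definition reduce N (xy : V * V) : net V :=
  let (x, y) := xy in
  match parent N x, parent N y with
  | Some px, Some py =>
      if [&& is_leaf N x, is_leaf N y & x != y] then
        if px == py then
          suppress (del_node N x) px
        else if is_ret N px && narc N py px then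
          suppress (suppress (del_arc N py px) py) px
        else N
      else N
  | _, _ => N
  end.

Definition reduce_seq N (S : seq (V * V)) : net V := foldl reduce N S.

Definition orchard N : Prop :=
  exists S : seq (V * V),
    is_tree (reduce_seq N S) /\ #|[set v | is_leaf (reduce_seq N S) v]| = 1.

Definition HGT_consistent N (t : V -> R) : Prop :=
  (forall u v, narc N u v -> (t u <= t v)%R /\ (t u = t v -> is_ret N v)) /\
  (forall u, u \in nodes N -> ~~ is_leaf N u ->
     exists v, narc N u v /\ (t u < t v)%R) /\
  (forall r u v, is_ret N r -> narc N u r -> narc N v r -> u <> v ->
     (t u = t r <-> ~ (t v = t r))).

End Net.

From mathcomp Require Import all_boot perm zify.
From Stdlib Require Import Reals Lra.
Set Implicit Arguments. Unset Strict Implicit. Unset Printing Implicit Defensive.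

(* Induction along a reduction sequence that ends in a tree, carrying a
   labelling which moreover puts every leaf strictly above every internal
   node.  A tree gets one from the lexicographic key (is a leaf, number of
   ancestors, rank).  Undoing a cherry reduction (x, y) restores the leaf x,
   labelled above everything, and its parent p, labelled with a fresh value
   between the label of its parent and those of the leaves.  Undoing a
   reticulated cherry reduction restores the reticulation p_x and the tree
   node p_y; both get one fresh value above their other parents and below the
   leaves, so the only new coincidence is along the arc p_y -> p_x.  The room
   below the leaves is exactly what the extra invariant provides. *)

Lemma exists_strict_upper_bound (T : eqType) (f : T -> R) (s : seq T) :
  exists M, forall v, v \in s -> (f v < M)%R.
Proof.
elim: s => [|a s [M HM]]; first by exists 0%R.
exists (Rmax M (f a + 1)) => v; rewrite in_cons => /orP [/eqP ->|/HM H].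
- have := Rmax_r M (f a + 1); lra.
- have := Rmax_l M (f a + 1); lra.
Qed.

Lemma exists_fresh_between (T : eqType) (f : T -> R) (P : pred T) (s : seq T) lo hi :
  (lo < hi)%R -> (forall v, v \in s -> P v -> (lo < f v)%R) ->
  exists z, [/\ (lo < z < hi)%R, forall v, v \in s -> P v -> (z < f v)%R
              & forall v, v \in s -> f v <> z].
Proof.
elim: s lo hi => [|a s IH] lo hi lo_hi lo_P.
  by exists ((lo + hi) / 2)%R; split => //; lra.
have lo_Ps v : v \in s -> P v -> (lo < f v)%R.
  by move=> sv; apply: lo_P; rewrite in_cons sv orbT.
pose hi' := if P a then Rmin hi (f a) else hi.
have hi'_hi : (hi' <= hi)%R by rewrite /hi'; case: (P a); [apply: Rmin_l|lra].
have hi'_a : P a -> (hi' <= f a)%R by rewrite /hi' => ->; apply: Rmin_r.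
have lo_hi' : (lo < hi')%R.
  rewrite /hi'; case Pa: (P a) => //.
  by apply: Rmin_glb_lt => //; apply: lo_P; rewrite ?mem_head.
have [z [z_in z_P z_s]] := IH lo hi' lo_hi' lo_Ps.
have below_a : P a -> (z < f a)%R by move=> Pa; have := hi'_a Pa; lra.
case: (Req_dec (f a) z) => [az|az].
- have [z2 [z2_in z2_P z2_s]] := IH lo z (proj1 z_in) lo_Ps.
  exists z2; split; first lra.
  + move=> v; rewrite in_cons => /orP [/eqP -> Pa|]; last exact: z2_P.
    by have := below_a Pa; lra.
  + by move=> v; rewrite in_cons => /orP [/eqP ->|/z2_s //]; lra.
- exists z; split; first lra.
  + by move=> v; rewrite in_cons => /orP [/eqP -> /below_a|/z_P].
  + by move=> v; rewrite in_cons => /orP [/eqP ->|/z_s].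
Qed.

Section NetFacts.
Variables (V : finType) (N : net V).
Implicit Types (u v w x y : V).

Lemma arc_outdeg_gt0 u v : narc N u v -> 0 < outdeg N u.
Proof. by move=> uv; apply/card_gt0P; exists v; rewrite inE. Qed.

Lemma arc_indeg_gt0 u v : narc N u v -> 0 < indeg N v.
Proof. by move=> uv; apply/card_gt0P; exists u; rewrite inE. Qed.

Lemma leaf_arcF x b : is_leaf N x -> narc N x b = false.
Proof. by case/and3P=> _ _ /eqP x0; apply/negP => /arc_outdeg_gt0; rewrite x0. Qed.

Lemma root_arcF r a : is_root N r -> narc N a r = false.
Proof. by case/and3P=> _ /eqP r0 _; apply/negP => /arc_indeg_gt0; rewrite r0. Qed.

Lemma tree_node_not_leaf v : is_tree_node N v -> ~~ is_leaf N v.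
Proof. by case/and3P=> _ _ out2; apply/negP => /and3P [_ _ /eqP out0]; rewrite out0 in out2. Qed.

Lemma tree_node_not_ret v : is_tree_node N v -> ~~ is_ret N v.
Proof. by case/and3P=> _ /eqP in1 _; apply/negP => /and3P [_ in2 _]; rewrite in1 in in2. Qed.

Lemma ret_not_leaf v : is_ret N v -> ~~ is_leaf N v.
Proof.
by case/and3P=> _ _ /eqP out1; apply/negP => /and3P [_ _ /eqP out0]; rewrite out0 in out1.
Qed.

Lemma node_types_eq (N' : net V) v :
    v \in nodes N' -> v \in nodes N -> indeg N' v = indeg N v -> outdeg N' v = outdeg N v ->
  [/\ is_root N' v = is_root N v, is_tree_node N' v = is_tree_node N v,
      is_ret N' v = is_ret N v & is_leaf N' v = is_leaf N v].
Proof.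
by move=> vN' vN din dout; rewrite /is_root /is_tree_node /is_ret /is_leaf vN' vN din dout.
Qed.

Lemma indeg1_parent v : indeg N v = 1 -> exists w, forall a, narc N a v = (a == w).
Proof.
move=> /eqP/cards1P [w Hw]; exists w => a.
by have := congr1 (fun A : {set V} => a \in A) Hw; rewrite /= !inE.
Qed.

Lemma parent_arc x p : parent N x = Some p -> narc N p x.
Proof. by rewrite /parent; case: pickP => // z zx [<-]. Qed.

Lemma unique_parent x p : indeg N x = 1 -> narc N p x -> forall a, narc N a x = (a == p).
Proof.
move=> /eqP/cards1P [w Hw] px a.
have inw b : narc N b x = (b == w).
  by have := congr1 (fun A : {set V} => b \in A) Hw; rewrite /= !inE.
by rewrite inw; have /eqP -> : p == w by rewrite -inw.
Qed.

Lemma unique_child v w : outdeg N v = 1 -> narc N v w -> forall b, narc N v b = (b == w).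
Proof.
move=> /eqP/cards1P [c Hc] vw b.
have inc a : narc N v a = (a == c).
  by have := congr1 (fun A : {set V} => a \in A) Hc; rewrite /= !inE.
by rewrite inc; have /eqP -> : w == c by rewrite -inc.
Qed.

Lemma indeg_unique_parent v w :
  (forall a, narc N a v = (a == w)) -> indeg N v = 1.
Proof.
move=> vw; rewrite /indeg (_ : [set a | narc N a v] = [set w]) ?cards1 //.
by apply/setP => a; rewrite !inE vw.
Qed.

Lemma outdeg_unique_child v w :
  (forall b, narc N v b = (b == w)) -> outdeg N v = 1.
Proof.
move=> vw; rewrite /outdeg (_ : [set b | narc N v b] = [set w]) ?cards1 //.
by apply/setP => b; rewrite !inE vw.
Qed.

Lemma leaf_parent x p : is_leaf N x -> narc N p x -> forall a, narc N a x = (a == p).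
Proof. by case/and3P=> _ /eqP in1 _; apply: unique_parent. Qed.

Hypothesis HN : is_network N.

Lemma arc_nodes u v : narc N u v -> u \in nodes N /\ v \in nodes N.
Proof. exact: HN.1. Qed.

Lemma arc_neq u v : narc N u v -> u != v.
Proof.
move=> uv; apply/eqP => eq_uv; have [_ [acyc _]] := HN.
by have := acyc _ _ uv; rewrite eq_uv connect0.
Qed.

Lemma connect_antisym u v : connect (narc N) u v -> connect (narc N) v u -> u = v.
Proof.
have [_ [acyc _]] := HN.
move=> /connectP [[|c p] /= Hp ->] // vu; move/andP: Hp => [uc Hp].
have cv : connect (narc N) c (last c p) by apply/connectP; exists p.
by have := acyc _ _ uc; rewrite (connect_trans cv vu).
Qed.

Lemma arc_arc_neq u v w : narc N u v -> narc N v w -> u != w.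
Proof.
move=> uv vw; apply/eqP => eq_uw; rewrite eq_uw in uv.
by have := arc_neq uv; rewrite (connect_antisym (connect1 uv) (connect1 vw)) eqxx.
Qed.

Lemma nonleaf_child u : u \in nodes N -> ~~ is_leaf N u -> exists v, narc N u v.
Proof.
have [_ [_ [types _]]] := HN; move=> uN uNl.
suff /card_gt0P [v] : 0 < outdeg N u by rewrite inE; exists v.
move: (types u uN) uNl; rewrite /is_root /is_tree_node /is_ret /is_leaf uN /=.
case/or4P=> [/andP [_ /eqP ->]|/andP [_ out2]|/andP [_ /eqP ->]|->] //.
by move=> _; apply: leq_trans out2.
Qed.

Hypothesis Hbin : binary N.

Lemma two_children v a b : narc N v a -> narc N v b -> a != b ->
  [/\ is_tree_node N v, indeg N v = 1 & forall c, narc N v c = (c == a) || (c == b)].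
Proof.
move=> va vb ab; have [vN _] := arc_nodes va.
have sub_ab : [set a; b] \subset [set c | narc N v c].
  by apply/subsetP => z; rewrite !inE => /orP [] /eqP ->.
have out2 : 2 <= outdeg N v.
  by have := subset_leq_card sub_ab; rewrite cards2 ab.
have tv : is_tree_node N v.
  have [_ [_ [types _]]] := HN; move: (types v vN); rewrite /is_root /is_ret /is_leaf.
  by case/or4P => // /and3P [_ _ /eqP out]; rewrite out in out2.
have deg3 : indeg N v + outdeg N v = 3 by apply: Hbin; rewrite tv.
case/and3P: (tv) => _ /eqP in1 _; rewrite in1 in deg3; split => // c.
have eq_ab : [set a; b] = [set c | narc N v c].
  by apply/eqP; rewrite eqEcard sub_ab cards2 ab; rewrite /outdeg in deg3; lia.
by have := congr1 (fun A : {set V} => c \in A) eq_ab; rewrite /= !inE.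
Qed.

Lemma ret_two_parents r u : is_ret N r -> narc N u r ->
  exists2 q, q != u & forall a, narc N a r = (a == u) || (a == q).
Proof.
move=> rret ur; have deg3 : indeg N r + outdeg N r = 3 by apply: Hbin; rewrite rret orbT.
case/and3P: rret => _ _ /eqP out1; rewrite out1 /indeg (cardsD1 u) inE ur in deg3.
have /cards1P [q Hq] : #|[set a | narc N a r] :\ u| == 1 by apply/eqP; lia.
have inq a : (a \in [set a | narc N a r] :\ u) = (a == q) by rewrite Hq inE.
exists q; first by have := inq q; rewrite eqxx !inE => /andP [].
move=> a; have := inq a; rewrite !inE.
by case: (eqVneq a u) => [->|_ /=] //; rewrite ur.
Qed.

End NetFacts.

Lemma card_preim_inj (V : finType) (f : V -> V) (P Q : pred V) :
  injective f -> (forall z, Q z = P (f z)) -> #|[set z | Q z]| = #|[set z | P z]|.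
Proof.
move=> f_inj QP; rewrite -(card_preimset [set z | P z] f_inj).
by apply: eq_card => z; rewrite !inE QP.
Qed.

Ltac simpl_neq :=
  repeat match goal with
  | H : is_true (?a != ?b) |- context [?a == ?b] => rewrite (negbTE H)
  | H : is_true (?a != ?b) |- context [?b == ?a] => rewrite [b == a]eq_sym (negbTE H)
  end; rewrite ?eqxx ?andbT ?andbF ?orbT ?orbF /=.

Lemma suppress_eq (V : finType) (N : net V) v u w :
    v \in nodes N -> (forall a, narc N a v = (a == u)) -> (forall b, narc N v b = (b == w)) ->
  suppress N v = Net (nodes N :\ v)
     (fun a b => (narc N a b && (a != v) && (b != v)) || ((a == u) && (b == w))).
Proof.
move=> vN vu vw; rewrite /suppress.
case: pickP => [u' |no_u]; last by have := no_u u; rewrite vu eqxx.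
case: pickP => [w' |no_w]; last by have := no_w w; rewrite vw eqxx.
rewrite vu vw => /eqP -> /eqP ->.
by rewrite vN (indeg_unique_parent vu) (outdeg_unique_child vw).
Qed.

Section TightLabelling.
Variable V : finType.
Implicit Types (N : net V) (t : V -> R).

Definition binary_network N := is_network N /\ binary N.

Definition tree_ret_arc N a b := narc N a b /\ is_tree_node N a /\ is_ret N b.

(* Restricting the conditions to the nodes of A lets a reduction step check
   only the nodes it restores. *)
Definition tight_labelling_on N t (A : {set V}) : Prop :=
  [/\ forall u v, narc N u v -> (u \in A) || (v \in A) ->
        (t u <= t v)%R /\ (t u = t v -> is_ret N v),
      forall u, u \in A -> ~~ is_leaf N u -> exists v, narc N u v /\ (t u < t v)%R,
      forall r u v, r \in A -> is_ret N r -> narc N u r -> narc N v r -> u <> v ->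
        (t u = t r <-> ~ t v = t r),
      forall a b, a \in A -> b \in nodes N -> a <> b -> t a = t b ->
        tree_ret_arc N a b \/ tree_ret_arc N b a
    & forall a b, a \in nodes N -> b \in nodes N -> (a \in A) || (b \in A) ->
        is_leaf N a -> ~~ is_leaf N b -> (t b < t a)%R].

Definition tight_labelling N t := tight_labelling_on N t (nodes N).

Lemma tight_labelling_HGT N t : is_network N -> tight_labelling N t ->
  HGT_consistent N t /\
  (forall a b, a \in nodes N -> b \in nodes N -> a <> b -> t a = t b ->
     tree_ret_arc N a b \/ tree_ret_arc N b a).
Proof.
move=> HN [arcs prog ret eqab _]; split; last by move=> a b aN; apply: eqab.
split; [|split].
- by move=> u v uv; have [uN _] := arc_nodes HN uv; apply: arcs; rewrite ?uN.
- exact: prog.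
- by move=> r u v /[dup] /and3P [rN _ _]; apply: ret.
Qed.

Lemma tree_tight_labelling N : is_tree N -> exists t, tight_labelling N t.
Proof.
move=> [HN noret]; pose n := #|V|.
pose anc v := #|[set u | connect (narc N) u v]|.
pose key v := ((is_leaf N v) * n.+1 + anc v) * n + enum_rank v.
have rank_lt v : enum_rank v < n := ltn_ord (enum_rank v).
have anc_le v : anc v <= n := max_card _.
have anc_lt u v : narc N u v -> anc u < anc v.
  move=> uv; apply: proper_card; rewrite properE; apply/andP; split.
    by apply/subsetP => w; rewrite !inE => wu; apply: connect_trans wu (connect1 uv).
  by apply/subsetPn; exists v; rewrite !inE ?connect0 //; have [_ [acyc _]] := HN; apply: acyc.
have key_lt u v : narc N u v -> key u < key v.
  move=> uv; rewrite /key (_ : is_leaf N u = false); last first.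
    by apply/negP => /(leaf_arcF v); rewrite uv.
  have := anc_lt _ _ uv; have := rank_lt u; have := rank_lt v; nia.
have key_inj : injective key.
  move=> a b /(congr1 (modn^~ n)); rewrite /key !modnMDl !modn_small //.
  by move/val_inj/enum_rank_inj.
exists (fun v => INR (key v)); split.
- move=> u v uv _; have /ltP/lt_INR := key_lt _ _ uv; split; [lra|move=> eq; lra].
- move=> u uN uNl; have [v uv] := nonleaf_child HN uN uNl.
  by exists v; split => //; apply/lt_INR/ltP/key_lt.
- by move=> r u v _; rewrite (negbTE (noret r)).
- by move=> a b _ _ ab /INR_eq /key_inj.
- move=> a b _ _ _ al bNl; apply/lt_INR/ltP.
  rewrite /key al (negbTE bNl); have := rank_lt a; have := rank_lt b; have := anc_le b; nia.
Qed.

End TightLabelling.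

(* A reduction step removes a set D of nodes and adds the arcs [new], which
   bypass D; all other nodes keep their degrees. *)
Section Contraction.
Variables (V : finType) (N N' : net V) (D : {set V}) (new : rel V).
Hypothesis HN : is_network N.
Hypothesis nodesN' : nodes N' = nodes N :\: D.
Hypothesis arcN' :
  forall a b, narc N' a b = [&& narc N a b, a \notin D & b \notin D] || new a b.
Hypothesis new_nodes : forall a b, new a b -> a \in nodes N' /\ b \in nodes N'.
Hypothesis degN' :
  forall v, v \in nodes N' -> indeg N' v = indeg N v /\ outdeg N' v = outdeg N v.

Lemma contraction_node v : (v \in nodes N') = (v \in nodes N) && (v \notin D).
Proof. by rewrite nodesN' inE andbC. Qed.

Lemma contraction_arc_nodes a b : narc N' a b -> a \in nodes N' /\ b \in nodes N'.
Proof.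
rewrite arcN' => /orP [/and3P [ab aD bD]|/new_nodes //].
by have [aN bN] := arc_nodes HN ab; rewrite !contraction_node aN bN aD bD.
Qed.

Lemma contraction_old_arc a b : a \notin D -> b \notin D -> narc N a b -> narc N' a b.
Proof. by move=> aD bD ab; rewrite arcN' ab aD bD. Qed.

Lemma contraction_types v : v \in nodes N' ->
  [/\ is_root N' v = is_root N v, is_tree_node N' v = is_tree_node N v,
      is_ret N' v = is_ret N v & is_leaf N' v = is_leaf N v].
Proof.
move=> vN'; have [din dout] := degN' vN'.
by apply: node_types_eq; rewrite // contraction_node in vN'; case/andP: vN'.
Qed.

Section ContractionNetwork.
Hypothesis Hbin : binary N.
Hypothesis new_path : forall a b, new a b -> connect (narc N) a b.
Hypothesis new_neq : forall a b, new a b -> a != b.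
Hypothesis root_notin : forall r, is_root N r -> r \notin D.

Lemma contraction_binary_network : binary_network N'.
Proof.
have [_ [_ [types [r [rootr uniq_root]]]]] := HN.
have arc_path a b : narc N' a b -> connect (narc N) a b.
  by rewrite arcN' => /orP [/and3P [ab _ _]|/new_path //]; apply: connect1.
have rN' : r \in nodes N'.
  by rewrite contraction_node root_notin // andbT; case/and3P: rootr.
split; last first.
  move=> v vtr; have vN' : v \in nodes N'.
    by case/orP: vtr => /and3P [].
  by have [-> ->] := degN' vN'; apply: Hbin; have [_ <- <- _] := contraction_types vN'.
split; first exact: contraction_arc_nodes.
split.
  move=> u v uv; apply/negP => vu.
  have uNv : u != v.
    by move: uv; rewrite arcN' => /orP [/and3P [/(arc_neq HN) //]|/new_neq].
  have := connect_antisym HN (arc_path _ _ uv) (connect_sub arc_path vu).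
  by move/eqP; rewrite (negbTE uNv).
split.
  move=> v vN'; have [-> -> -> ->] := contraction_types vN'.
  by apply: types; rewrite contraction_node in vN'; case/andP: vN'.
exists r; split; first by have [-> _ _ _] := contraction_types rN'.
move=> r' rootr'; have r'N' : r' \in nodes N' by case/and3P: rootr'.
by apply: uniq_root; have [<- _ _ _] := contraction_types r'N'.
Qed.

End ContractionNetwork.

Section ContractionLabelling.
Variables (t t' : V -> R).
Hypothesis new_leaf : forall a b, new a b -> is_leaf N b.
Hypothesis ret_child_notin : forall d r, d \in D -> narc N d r -> r \notin D -> ~~ is_ret N r.
Hypothesis t_eq : {in nodes N', t =1 t'}.
Hypothesis new_progress : forall a b, new a b -> exists v, narc N a v /\ (t a < t v)%R.

Lemma contraction_ret_arc a b : narc N' a b -> is_ret N b -> narc N a b.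
Proof.
rewrite arcN' => /orP [/and3P [] //|/new_leaf bl] br.
by have := ret_not_leaf br; rewrite bl.
Qed.

Lemma tight_labelling_contraction :
  tight_labelling N' t' -> tight_labelling_on N t D -> tight_labelling N t.
Proof.
move=> [arcs' prog' ret' eq' leaf'] [arcsD progD retD eqD leafD].
have inN' v : v \in nodes N -> v \notin D -> v \in nodes N'.
  by move=> vN vD; rewrite contraction_node vN vD.
split.
- move=> u v uv _; case: (boolP ((u \in D) || (v \in D))) => [|]; first exact: arcsD.
  rewrite negb_or => /andP [uD vD]; have [uN vN] := arc_nodes HN uv.
  have uN' := inN' _ uN uD; have vN' := inN' _ vN vD.
  have [_ _ <- _] := contraction_types vN'.
  by rewrite !t_eq //; apply: arcs'; rewrite ?uN' ?contraction_old_arc.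
- move=> u uN uNl; case: (boolP (u \in D)) => [|uD]; first by move/progD; apply.
  have uN' := inN' _ uN uD; have [_ _ _ ul] := contraction_types uN'.
  have [v [uv ltuv]] := prog' u uN' ltac:(by rewrite ul).
  move: (uv); rewrite arcN' => /orP [/and3P [uvN _ _]|/new_progress //].
  by exists v; split => //; rewrite !t_eq //; have [] := contraction_arc_nodes uv.
- move=> r u v rN rret ur vr uNv; case: (boolP (r \in D)) => [|rD]; first by move/retD; apply.
  have parent_in w : narc N w r -> w \in nodes N' /\ narc N' w r.
    move=> wr; have wD : w \notin D.
      by apply/negP => /ret_child_notin /(_ wr rD); rewrite rret.
    by rewrite inN' ?contraction_old_arc // (arc_nodes HN wr).1.
  have [uN' ur'] := parent_in _ ur; have [vN' vr'] := parent_in _ vr.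
  have rN' := inN' _ rN rD; have [_ _ rret' _] := contraction_types rN'.
  by rewrite !t_eq //; apply: ret' => //; rewrite rret'.
- move=> a b aN bN ab tab.
  case: (boolP (a \in D)) => [aD|aD]; first exact: eqD.
  case: (boolP (b \in D)) => [bD|bD].
    by rewrite or_comm; apply: eqD => //; apply: nesym.
  have aN' := inN' _ aN aD; have bN' := inN' _ bN bD.
  have [_ ta ra _] := contraction_types aN'; have [_ tb rb _] := contraction_types bN'.
  rewrite !t_eq // in tab; rewrite /tree_ret_arc -ta -tb -ra -rb.
  case: (eq' a b aN' bN' ab tab) => [[ab' tra]|[ba' trb]]; [left|right].
  + by split=> //; apply: contraction_ret_arc ab' _; rewrite -rb; case: tra.
  + by split=> //; apply: contraction_ret_arc ba' _; rewrite -ra; case: trb.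
- move=> a b aN bN _ al bNl.
  case: (boolP ((a \in D) || (b \in D))) => [abD|]; first exact: leafD.
  rewrite negb_or => /andP [aD bD].
  have aN' := inN' _ aN aD; have bN' := inN' _ bN bD.
  have [_ _ _ la] := contraction_types aN'; have [_ _ _ lb] := contraction_types bN'.
  by rewrite !t_eq //; apply: leaf'; rewrite ?la ?lb ?aN' ?bN'.
Qed.

End ContractionLabelling.
End Contraction.

Section CherryReduction.
Variables (V : finType) (N N' : net V) (x y p g : V).
Hypothesis HN : is_network N.
Hypotheses (xl : is_leaf N x) (yl : is_leaf N y) (xNy : x != y).
Hypothesis x_parent : forall a, narc N a x = (a == p).
Hypothesis y_parent : forall a, narc N a y = (a == p).
Hypothesis p_children : forall b, narc N p b = (b == x) || (b == y).
Hypothesis p_parent : forall a, narc N a p = (a == g).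
Hypothesis nodesN' : nodes N' = nodes N :\: [set x; p].
Hypothesis arcN' : forall a b,
  narc N' a b = [&& narc N a b, a \notin [set x; p] & b \notin [set x; p]] || (a == g) && (b == y).

Lemma cherry_arcs : [/\ narc N p x, narc N p y & narc N g p].
Proof. by rewrite x_parent y_parent p_parent !eqxx. Qed.

Lemma cherry_distinct : [/\ p != x, p != y, g != p, g != x & g != y].
Proof.
have [px py gp] := cherry_arcs.
split; [exact (arc_neq HN px)|exact (arc_neq HN py)|exact (arc_neq HN gp)| |].
- by apply/eqP => gx; move: gp; rewrite gx leaf_arcF.
- by apply/eqP => gy; move: gp; rewrite gy leaf_arcF.
Qed.

Lemma cherry_degrees v :
  v \in nodes N' -> indeg N' v = indeg N v /\ outdeg N' v = outdeg N v.
Proof.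
have [pNx pNy gNp gNx gNy] := cherry_distinct.
rewrite /indeg /outdeg nodesN' !inE negb_or => /andP [/andP [vNx vNp] vN]; split.
- case: (eqVneq v y) => [->|vNy].
    apply: (card_preim_inj (f := tperm g p)) => [|z]; first exact: perm_inj.
    rewrite arcN' !y_parent !inE.
    by case: (tpermP g p z) => [->|->|/eqP zNg /eqP zNp]; simpl_neq.
  apply: eq_card => z; rewrite !inE arcN' !inE; simpl_neq.
  case: (eqVneq z x) => [->|zNx]; first by rewrite leaf_arcF.
  by case: (eqVneq z p) => [->|zNp]; rewrite ?p_children; simpl_neq.
- apply: (card_preim_inj (f := tperm p y)) => [|b]; first exact: perm_inj.
  rewrite arcN' !inE; simpl_neq.
  case: (tpermP p y b) => [->|->|/eqP bNp /eqP bNy]; simpl_neq.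
  + by rewrite y_parent; simpl_neq.
  + by rewrite y_parent p_parent; simpl_neq.
  + by case: (eqVneq b x) => [->|bNx]; rewrite ?x_parent; simpl_neq.
Qed.

Let cherry_new a b := (a == g) && (b == y).

Lemma cherry_new_nodes a b : cherry_new a b -> a \in nodes N' /\ b \in nodes N'.
Proof.
have [pNx pNy gNp gNx gNy] := cherry_distinct.
have [_ py gp] := cherry_arcs.
move=> /andP [/eqP -> /eqP ->]; rewrite nodesN' !inE; simpl_neq.
by rewrite (arc_nodes HN gp).1 (arc_nodes HN py).2.
Qed.

Lemma cherry_binary_network : binary N -> binary_network N'.
Proof.
have [pNx pNy gNp gNx gNy] := cherry_distinct.
move=> Hbin.
apply: (contraction_binary_network HN nodesN' arcN' cherry_new_nodes cherry_degrees Hbin).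
- have [_ py gp] := cherry_arcs.
  by move=> a b /andP [/eqP -> /eqP ->]; apply: connect_trans (connect1 gp) (connect1 py).
- by move=> a b /andP [/eqP -> /eqP ->].
- move=> r rootr; rewrite !inE negb_or; apply/andP; split; apply/eqP => er.
  + by move: (root_arcF p rootr); rewrite er x_parent eqxx.
  + by move: (root_arcF g rootr); rewrite er p_parent eqxx.
Qed.

Section CherryLabelling.
Variables (t' : V -> R) (s m : R).
Hypothesis g_s : (t' g < s)%R.
Hypothesis s_leaves : forall v, v \in nodes N' -> is_leaf N' v -> (s < t' v)%R.
Hypothesis s_fresh : forall v, v \in nodes N' -> t' v <> s.
Hypothesis s_m : (s < m)%R.
Hypothesis t'_m : forall v, v \in nodes N' -> (t' v < m)%R.

Definition cherry_label v := if v == p then s else if v == x then m else t' v.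

Lemma cherry_label_old v : v != x -> v != p -> cherry_label v = t' v.
Proof. by move=> vNx vNp; rewrite /cherry_label (negbTE vNx) (negbTE vNp). Qed.

Lemma cherry_label_on : tight_labelling_on N cherry_label [set x; p].
Proof.
have [pNx pNy gNp gNx gNy] := cherry_distinct.
have [tp tx] : cherry_label p = s /\ cherry_label x = m.
  by rewrite /cherry_label [x == p]eq_sym (negbTE pNx) !eqxx.
have inN' v : v \in nodes N -> v != x -> v != p -> v \in nodes N'.
  by move=> vN vNx vNp; rewrite nodesN' !inE negb_or vNx vNp.
have [_ yN'] : g \in nodes N' /\ y \in nodes N'.
  by apply: cherry_new_nodes; rewrite /cherry_new !eqxx.
have yl' : is_leaf N' y by have [_ _ _ ->] := contraction_types nodesN' cherry_degrees yN'.
have s_y : (s < t' y)%R by apply: s_leaves.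
have label_top v : v \in nodes N -> v != x -> (cherry_label v < m)%R.
  move=> vN vNx; case: (eqVneq v p) => [->|vNp]; first by rewrite tp.
  by rewrite cherry_label_old //; apply: t'_m; rewrite inN'.
split.
- move=> u v uv uvD; case: (eqVneq u p) => [eu|uNp].
    move: uv; rewrite eu p_children => /orP [] /eqP ->.
    + by rewrite tp tx; split => [|eq]; lra.
    + by rewrite tp cherry_label_old 1?eq_sym //; split => [|eq]; lra.
  case: (eqVneq u x) => [eu|uNx]; first by move: uv; rewrite eu leaf_arcF.
  case: (eqVneq v p) => [ev|vNp].
    move: uv; rewrite ev p_parent => /eqP ->.
    by rewrite tp cherry_label_old //; split => [|eq]; lra.
  case: (eqVneq v x) => [ev|vNx]; first by move: uv; rewrite ev x_parent (negbTE uNp).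
  by move: uvD; rewrite !inE (negbTE uNx) (negbTE uNp) (negbTE vNx) (negbTE vNp).
- move=> u; rewrite !inE => /orP [] /eqP -> ul; first by rewrite xl in ul.
  by exists x; split; [rewrite p_children eqxx|rewrite tp tx].
- move=> r u v; rewrite !inE => /orP [] /eqP -> rret.
    by have := ret_not_leaf rret; rewrite xl.
  by case/and3P: rret; rewrite (indeg_unique_parent p_parent).
- move=> a b; rewrite !inE => /orP [] /eqP -> bN ab tab; exfalso.
  + by move: tab; rewrite tx; have := label_top b bN (introN eqP (nesym ab)); lra.
  + move: tab; rewrite tp; case: (eqVneq b x) => [->|bNx]; first by rewrite tx; lra.
    have bNp : b != p by apply/eqP => /esym.
    by rewrite cherry_label_old //; apply/nesym/s_fresh; rewrite inN'.
- move=> a b aN bN; rewrite !inE => abD al bNl.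
  have pNl : ~~ is_leaf N p by apply/negP => /(leaf_arcF x); rewrite p_children eqxx.
  have aNp : a != p by apply: contraNneq pNl => <-.
  have bNx : b != x by apply: contraNneq bNl => ->.
  case: (eqVneq a x) => [->|aNx]; first by rewrite tx; apply: label_top.
  move: abD; rewrite (negbTE aNx) (negbTE aNp) (negbTE bNx) /= => /eqP ->.
  have aN' := inN' _ aN aNx aNp.
  have [_ _ _ al'] := contraction_types nodesN' cherry_degrees aN'.
  by rewrite tp cherry_label_old //; apply: s_leaves; rewrite ?al'.
Qed.

Lemma cherry_label_tight : tight_labelling N' t' -> tight_labelling N cherry_label.
Proof.
have [pNx pNy gNp gNx gNy] := cherry_distinct.
have t_eq : {in nodes N', cherry_label =1 t'}.
  by move=> v; rewrite nodesN' !inE negb_or => /andP [/andP [vNx vNp] _]; apply: cherry_label_old.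
move=> tight'; apply: (tight_labelling_contraction HN nodesN' arcN' cherry_new_nodes
                         cherry_degrees _ _ t_eq _ tight' cherry_label_on).
- by move=> a b /andP [_ /eqP ->].
- move=> d r; rewrite !inE => /orP [] /eqP ->; first by rewrite leaf_arcF.
  by rewrite p_children => /orP [] /eqP -> _; apply/negP => /ret_not_leaf; rewrite ?xl ?yl.
- move=> a b /andP [/eqP -> _]; exists p; split; first by rewrite p_parent.
  by rewrite cherry_label_old // /cherry_label eqxx.
Qed.

End CherryLabelling.

Lemma cherry_tight_labelling t' : tight_labelling N' t' -> exists t, tight_labelling N t.
Proof.
move=> tight'; have [_ _ _ _ leaf'] := tight'.
have gy : cherry_new g y by rewrite /cherry_new !eqxx.
have [gN' _] := cherry_new_nodes gy.
have gNl' : ~~ is_leaf N' g by apply/negP => /(leaf_arcF y); rewrite arcN' !eqxx orbT.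
have g_below v : v \in enum (nodes N') -> is_leaf N' v -> (t' g < t' v)%R.
  by rewrite mem_enum => vN' vl; apply: leaf' => //; rewrite vN'.
have [s [s_in s_leaves s_fresh]] :=
  exists_fresh_between (lo := t' g) (hi := (t' g + 1)%R) ltac:(lra) g_below.
have [M t'M] := exists_strict_upper_bound t' (enum (nodes N')).
exists (cherry_label t' s (Rmax M (s + 1))); apply: cherry_label_tight => //.
- by case: s_in.
- by move=> v vN'; apply: s_leaves; rewrite mem_enum.
- by move=> v vN'; apply: s_fresh; rewrite mem_enum.
- by have := Rmax_r M (s + 1); lra.
- by move=> v; rewrite -mem_enum => /t'M; have := Rmax_l M (s + 1); lra.
Qed.

End CherryReduction.

Section ReticulatedCherryReduction.
Variables (V : finType) (N N' : net V) (x y px py g q : V).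
Hypothesis HN : is_network N.
Hypotheses (xl : is_leaf N x) (yl : is_leaf N y) (xNy : x != y).
Hypotheses (pxr : is_ret N px) (pyt : is_tree_node N py) (qNpy : q != py).
Hypothesis x_parent : forall a, narc N a x = (a == px).
Hypothesis y_parent : forall a, narc N a y = (a == py).
Hypothesis px_child : forall b, narc N px b = (b == x).
Hypothesis py_children : forall b, narc N py b = (b == px) || (b == y).
Hypothesis px_parents : forall a, narc N a px = (a == py) || (a == q).
Hypothesis py_parent : forall a, narc N a py = (a == g).
Hypothesis nodesN' : nodes N' = nodes N :\: [set px; py].
Hypothesis arcN' : forall a b,
  narc N' a b = [&& narc N a b, a \notin [set px; py] & b \notin [set px; py]]
                || ((a == g) && (b == y) || (a == q) && (b == x)).

Lemma rcherry_arcs :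
  [/\ narc N px x, narc N py y, narc N py px, narc N g py & narc N q px].
Proof. by rewrite x_parent y_parent py_children px_parents py_parent !eqxx ?orbT. Qed.

Lemma rcherry_distinct :
  [/\ [/\ px != x, px != y, py != x, py != y & px != py],
      [/\ g != px, g != py, g != x & g != y] & [/\ q != px, q != x & q != y]].
Proof.
have [pxx pyy pypx gpy qpx] := rcherry_arcs.
have not_leaf a b : narc N a b -> a != x /\ a != y.
  by move=> ab; split; apply/eqP => e; move: ab; rewrite e leaf_arcF.
have [pxNx pxNy] := not_leaf _ _ pxx; have [pyNx _] := not_leaf _ _ pypx.
have [gNx gNy] := not_leaf _ _ gpy; have [qNx qNy] := not_leaf _ _ qpx.
split.
- split=> //; first exact (arc_neq HN pyy).
  by rewrite eq_sym; exact (arc_neq HN pypx).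
- by split=> //; [exact (arc_arc_neq HN gpy pypx)|exact (arc_neq HN gpy)].
- by split=> //; exact (arc_neq HN qpx).
Qed.

Lemma rcherry_degrees v :
  v \in nodes N' -> indeg N' v = indeg N v /\ outdeg N' v = outdeg N v.
Proof.
have [[pxNx pxNy pyNx pyNy pxNpy] [gNpx gNpy gNx gNy] [qNpx qNx qNy]] := rcherry_distinct.
rewrite /indeg /outdeg nodesN' !inE negb_or => /andP [/andP [vNpx vNpy] vN]; split.
- case: (eqVneq v y) => [->|vNy].
    apply: (card_preim_inj (f := tperm g py)) => [|z]; first exact: perm_inj.
    rewrite arcN' !y_parent !inE.
    by case: (tpermP g py z) => [->|->|/eqP zNg /eqP zNpy]; simpl_neq.
  case: (eqVneq v x) => [->|vNx].
    apply: (card_preim_inj (f := tperm q px)) => [|z]; first exact: perm_inj.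
    rewrite arcN' !x_parent !inE.
    by case: (tpermP q px z) => [->|->|/eqP zNq /eqP zNpx]; simpl_neq.
  apply: eq_card => z; rewrite !inE arcN' !inE; simpl_neq.
  case: (eqVneq z px) => [->|zNpx]; first by rewrite px_child; simpl_neq.
  by case: (eqVneq z py) => [->|zNpy]; rewrite ?py_children; simpl_neq.
- apply: (card_preim_inj (f := tperm px x \o tperm py y)) => [|b].
    by apply: inj_comp; apply: perm_inj.
  have yNx : y != x by rewrite eq_sym.
  have xNpy : x != py by rewrite eq_sym.
  have pyNpx : py != px by rewrite eq_sym.
  have yNpx : y != px by rewrite eq_sym.
  rewrite arcN' !inE /=.
  case: (eqVneq b py) => [->|bNpy].
    by rewrite tpermL (tpermD pxNy xNy) y_parent; simpl_neq.
  case: (eqVneq b y) => [->|bNy].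
    by rewrite tpermR (tpermD pxNpy xNpy) py_parent y_parent; simpl_neq.
  case: (eqVneq b px) => [->|bNpx].
    by rewrite (tpermD pyNpx yNpx) tpermL x_parent; simpl_neq.
  case: (eqVneq b x) => [->|bNx].
    by rewrite (tpermD pyNx yNx) tpermR px_parents x_parent; simpl_neq.
  by rewrite !tpermD 1?eq_sym //; simpl_neq.
Qed.

Let rcherry_new a b := (a == g) && (b == y) || (a == q) && (b == x).

Lemma rcherry_new_nodes a b : rcherry_new a b -> a \in nodes N' /\ b \in nodes N'.
Proof.
have [pxx pyy pypx gpy qpx] := rcherry_arcs.
have [[pxNx pxNy pyNx pyNy pxNpy] [gNpx gNpy gNx gNy] [qNpx qNx qNy]] := rcherry_distinct.
rewrite nodesN' !inE; move=> /orP [] /andP [/eqP -> /eqP ->]; simpl_neq.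
- by rewrite (arc_nodes HN gpy).1 (arc_nodes HN pyy).2.
- by rewrite (arc_nodes HN qpx).1 (arc_nodes HN pxx).2.
Qed.

Lemma rcherry_binary_network : binary N -> binary_network N'.
Proof.
have [pxx pyy pypx gpy qpx] := rcherry_arcs.
have [_ [_ _ gNx gNy] [_ qNx _]] := rcherry_distinct.
move=> Hbin; apply: (contraction_binary_network HN nodesN' arcN' rcherry_new_nodes
                       rcherry_degrees Hbin).
- move=> a b /orP [] /andP [/eqP -> /eqP ->].
  + exact: connect_trans (connect1 gpy) (connect1 pyy).
  + exact: connect_trans (connect1 qpx) (connect1 pxx).
- by move=> a b /orP [] /andP [/eqP -> /eqP ->].
- move=> r rootr; rewrite !inE negb_or; apply/andP; split; apply/eqP => er.
  + by move: (root_arcF py rootr); rewrite er pypx.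
  + by move: (root_arcF g rootr); rewrite er gpy.
Qed.

Section ReticulatedCherryLabelling.
Variables (t' : V -> R) (s : R).
Hypotheses (g_s : (t' g < s)%R) (q_s : (t' q < s)%R).
Hypothesis s_leaves : forall v, v \in nodes N' -> is_leaf N' v -> (s < t' v)%R.
Hypothesis s_fresh : forall v, v \in nodes N' -> t' v <> s.

Definition rcherry_label v := if v \in [set px; py] then s else t' v.

Lemma rcherry_label_old : {in nodes N', rcherry_label =1 t'}.
Proof. by move=> v; rewrite /rcherry_label nodesN' !inE => /andP [/negbTE -> _]. Qed.

Lemma rcherry_label_on : tight_labelling_on N rcherry_label [set px; py].
Proof.
have [_ _ pypx _ _] := rcherry_arcs.
have [[pxNx pxNy pyNx pyNy pxNpy] [gNpx gNpy gNx gNy] [qNpx qNx qNy]] := rcherry_distinct.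
have [tpx tpy] : rcherry_label px = s /\ rcherry_label py = s.
  by rewrite /rcherry_label !inE !eqxx orbT.
have inN' v : v \in nodes N -> v \notin [set px; py] -> v \in nodes N'.
  by move=> vN vD; rewrite nodesN' inE vD vN.
have gy : rcherry_new g y by rewrite /rcherry_new !eqxx.
have qx : rcherry_new q x by rewrite /rcherry_new !eqxx orbT.
have [[gN' yN'] [qN' xN']] := (rcherry_new_nodes gy, rcherry_new_nodes qx).
have types := contraction_types nodesN' rcherry_degrees.
have s_y : (s < t' y)%R by apply: s_leaves => //; have [_ _ _ ->] := types _ yN'.
have s_x : (s < t' x)%R by apply: s_leaves => //; have [_ _ _ ->] := types _ xN'.
split.
- move=> u v uv uvD; case: (eqVneq u py) => [eu|uNpy].
    move: uv; rewrite eu py_children => /orP [] /eqP ->.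
    + by rewrite tpx tpy; split => [|_]; [lra|].
    + by rewrite tpy rcherry_label_old //; split => [|eq]; lra.
  case: (eqVneq u px) => [eu|uNpx].
    move: uv; rewrite eu px_child => /eqP ->.
    by rewrite tpx rcherry_label_old //; split => [|eq]; lra.
  case: (eqVneq v py) => [ev|vNpy].
    move: uv; rewrite ev py_parent => /eqP ->.
    by rewrite tpy rcherry_label_old //; split => [|eq]; lra.
  case: (eqVneq v px) => [ev|vNpx].
    move: uv; rewrite ev px_parents (negbTE uNpy) /= => /eqP ->.
    by rewrite tpx rcherry_label_old //; split => [|eq]; lra.
  by move: uvD; rewrite !inE; simpl_neq.
- move=> u; rewrite !inE => /orP [] /eqP -> _.
  + by exists x; split; [rewrite px_child|rewrite tpx rcherry_label_old].
  + by exists y; split; [rewrite py_children eqxx orbT|rewrite tpy rcherry_label_old].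
- move=> r u v; rewrite !inE => /orP [] /eqP -> rret.
    rewrite !px_parents => /orP [] /eqP -> /orP [] /eqP -> // _.
    + by rewrite tpx tpy rcherry_label_old //; split=> // _; lra.
    + by rewrite tpx tpy rcherry_label_old //; split=> [|[]] //; lra.
  by rewrite (negbTE (tree_node_not_ret pyt)) in rret.
- move=> a b; rewrite !inE => aD bN ab tab.
  case: (boolP (b \in [set px; py])) => [|bD].
    rewrite !inE; case/orP: aD => /eqP ea; case/orP => /eqP eb; subst a b => //.
    + by right.
    + by left.
  have bN' := inN' _ bN bD.
  have tas : rcherry_label a = s by case/orP: aD => /eqP ->.
  by have := s_fresh bN'; rewrite -rcherry_label_old // -tab tas.
- move=> a b aN bN abD al bNl.
  have aNpx : a != px by apply: contraTneq al => ->; exact: ret_not_leaf.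
  have aNpy : a != py by apply: contraTneq al => ->; exact: tree_node_not_leaf.
  move: abD; rewrite !inE (negbTE aNpx) (negbTE aNpy) /= => bD.
  have aN' : a \in nodes N' by rewrite inN' // !inE negb_or aNpx aNpy.
  have [_ _ _ al'] := types _ aN'.
  by rewrite (rcherry_label_old aN') /rcherry_label !inE bD; apply: s_leaves; rewrite ?al'.
Qed.

Lemma rcherry_label_tight : tight_labelling N' t' -> tight_labelling N rcherry_label.
Proof.
have [[pxNx pxNy pyNx pyNy pxNpy] [gNpx gNpy gNx gNy] [qNpx qNx qNy]] := rcherry_distinct.
move=> tight'; apply: (tight_labelling_contraction HN nodesN' arcN' rcherry_new_nodes
                         rcherry_degrees _ _ rcherry_label_old _ tight' rcherry_label_on).
- by move=> a b /orP [] /andP [_ /eqP ->].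
- move=> d r; rewrite !inE => /orP [] /eqP ->.
    by rewrite px_child => /eqP -> _; apply/negP => /ret_not_leaf; rewrite xl.
  rewrite py_children => /orP [] /eqP -> //; first by rewrite eqxx.
  by move=> _; apply/negP => /ret_not_leaf; rewrite yl.
- move=> a b /orP [] /andP [/eqP -> _]; [exists py|exists px]; split;
    rewrite ?py_parent ?px_parents ?eqxx ?orbT //.
  + by rewrite /rcherry_label !inE; simpl_neq.
  + by rewrite /rcherry_label !inE; simpl_neq.
Qed.

End ReticulatedCherryLabelling.

Lemma rcherry_tight_labelling t' : tight_labelling N' t' -> exists t, tight_labelling N t.
Proof.
move=> tight'; have [_ _ _ _ leaf'] := tight'.
have new_arc a b : rcherry_new a b -> narc N' a b by move=> ab; rewrite arcN'; apply/orP; right.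
have gy : rcherry_new g y by rewrite /rcherry_new !eqxx.
have qx : rcherry_new q x by rewrite /rcherry_new !eqxx orbT.
have [[gN' _] [qN' _]] := (rcherry_new_nodes gy, rcherry_new_nodes qx).
have gNl' : ~~ is_leaf N' g by apply/negP => /(leaf_arcF y); rewrite new_arc.
have qNl' : ~~ is_leaf N' q by apply/negP => /(leaf_arcF x); rewrite new_arc.
pose lo := Rmax (t' g) (t' q).
have lo_below v : v \in enum (nodes N') -> is_leaf N' v -> (lo < t' v)%R.
  by rewrite mem_enum => vN' vl; apply: Rmax_lub_lt; apply: leaf' => //; rewrite vN'.
have [s [s_in s_leaves s_fresh]] :=
  exists_fresh_between (lo := lo) (hi := (lo + 1)%R) ltac:(lra) lo_below.
exists (rcherry_label t' s); apply: rcherry_label_tight => //.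
- by move: s_in; rewrite /lo; have := Rmax_l (t' g) (t' q); lra.
- by move: s_in; rewrite /lo; have := Rmax_r (t' g) (t' q); lra.
- by move=> v vN'; apply: s_leaves; rewrite mem_enum.
- by move=> v vN'; apply: s_fresh; rewrite mem_enum.
Qed.

End ReticulatedCherryReduction.

Definition lifts_tight_labellings (V : finType) (N N' : net V) :=
  binary_network N' /\ forall t', tight_labelling N' t' -> exists t, tight_labelling N t.

Lemma reduce_cherry (V : finType) (N : net V) x y p :
    binary_network N -> is_leaf N x -> is_leaf N y -> x != y -> narc N p x -> narc N p y ->
  lifts_tight_labellings N (suppress (del_node N x) p).
Proof.
move=> [HN Hbin] xl yl xNy px py.
have [_ in1 p_children] := two_children HN Hbin px py xNy.
have [g p_parent] := indeg1_parent in1.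
have x_parent := leaf_parent xl px; have y_parent := leaf_parent yl py.
have [pNx _ _ gNx gNy] := cherry_distinct HN xl yl x_parent y_parent p_parent.
rewrite (@suppress_eq _ _ p g y); first last.
- by move=> b /=; rewrite p_children; case: (eqVneq b x) => [->|]; simpl_neq.
- by move=> a /=; rewrite p_parent; case: (eqVneq a g) => [->|]; simpl_neq.
- by rewrite /= in_setD1 pNx (arc_nodes HN px).1.
set N' := Net _ _.
have nodesN' : nodes N' = nodes N :\: [set x; p] by rewrite /= setDDl.
have arcN' a b : narc N' a b =
    [&& narc N a b, a \notin [set x; p] & b \notin [set x; p]] || (a == g) && (b == y).
  rewrite /= !inE !negb_or.
  by case: (narc N a b) (a != x) (a != p) (b != x) (b != p) => [] [] [] [] [].
split.
- exact: cherry_binary_network HN xl yl xNy x_parent y_parent p_children p_parent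
    nodesN' arcN' Hbin.
- exact: cherry_tight_labelling HN xl yl xNy x_parent y_parent p_children p_parent nodesN' arcN'.
Qed.

Lemma reduce_rcherry (V : finType) (N : net V) x y px py :
    binary_network N -> is_leaf N x -> is_leaf N y -> x != y ->
    narc N px x -> narc N py y -> is_ret N px -> narc N py px ->
  lifts_tight_labellings N (suppress (suppress (del_arc N py px) py) px).
Proof.
move=> [HN Hbin] xl yl xNy pxx pyy pxr pypx.
have pxNy : px != y by apply/eqP => e; move: pxx; rewrite e leaf_arcF.
have [pyt in1 py_children] := two_children HN Hbin pypx pyy pxNy.
have [g py_parent] := indeg1_parent in1.
have [q qNpy px_parents] := ret_two_parents Hbin pxr pypx.
have x_parent := leaf_parent xl pxx; have y_parent := leaf_parent yl pyy.
have px_child : forall b, narc N px b = (b == x).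
  by case/and3P: pxr => _ _ /eqP out1; apply: unique_child out1 pxx.
have [[pxNx _ pyNx pyNy pxNpy] [gNpx gNpy gNx gNy] [qNpx qNx qNy]] :=
  rcherry_distinct HN xl yl x_parent y_parent py_children px_parents py_parent.
rewrite (@suppress_eq _ _ py g y); first last.
- by move=> b /=; rewrite py_children xpair_eqE; case: (eqVneq b px) => [->|bNpx]; simpl_neq.
- by move=> a /=; rewrite py_parent xpair_eqE; case: (eqVneq a g) => [->|aNg]; simpl_neq.
- exact: (arc_nodes HN pyy).1.
rewrite (@suppress_eq _ _ px q x); first last.
- by move=> b /=; rewrite px_child xpair_eqE; case: (eqVneq b x) => [->|bNx]; simpl_neq.
- by move=> a /=; rewrite px_parents xpair_eqE; case: (eqVneq a py) => [->|aNpy]; simpl_neq.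
- by rewrite /= in_setD1 pxNpy (arc_nodes HN pxx).1.
set N' := Net _ _.
have nodesN' : nodes N' = nodes N :\: [set px; py] by rewrite /= setDDl setUC.
have arcN' a b : narc N' a b =
    [&& narc N a b, a \notin [set px; py] & b \notin [set px; py]]
    || ((a == g) && (b == y) || (a == q) && (b == x)).
  rewrite /= !inE !negb_or xpair_eqE.
  case: (eqVneq a py) => [->|aNpy]; first by simpl_neq.
  case: (eqVneq a g) => [->|aNg]; simpl_neq; last first.
    by case: (narc N a b) (a != px) (b != px) (b != py) => [] [] [] [].
  case: (eqVneq b y) => [->|bNy]; simpl_neq => //.
  by case: (narc N g b) (b != px) (b != py) => [] [] [].
split.
- exact: rcherry_binary_network HN xl yl xNy qNpy x_parent y_parent px_child py_children
    px_parents py_parent nodesN' arcN' Hbin.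
- exact: rcherry_tight_labelling HN xl yl xNy pxr pyt qNpy x_parent y_parent px_child
    py_children px_parents py_parent nodesN' arcN'.
Qed.

Lemma reduce_step (V : finType) (N : net V) xy :
  binary_network N -> lifts_tight_labellings N (reduce N xy).
Proof.
move=> HG; have unchanged : lifts_tight_labellings N N by split => // t' Ht'; exists t'.
case: xy => x y; rewrite /reduce.
case px_x: (parent N x) => [px|] //; case py_y: (parent N y) => [py|] //.
case: ifP => [/and3P [xl yl xNy]|_] //.
have pxx := parent_arc px_x; have pyy := parent_arc py_y.
case: ifP => [/eqP eq_p|_].
  by rewrite eq_p in pxx *; exact: reduce_cherry HG xl yl xNy pxx pyy.
by case: ifP => [/andP [pxr pypx]|_] //; exact: reduce_rcherry HG xl yl xNy pxx pyy pxr pypx.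
Qed.

Lemma reduce_seq_tight_labelling (V : finType) (N : net V) S :
  binary_network N -> is_tree (reduce_seq N S) -> exists t, tight_labelling N t.
Proof.
elim: S N => [|xy S IH] N HG tree; first exact: tree_tight_labelling.
have [HG' lift] := reduce_step xy HG.
by have [t' Ht'] := IH _ HG' tree; apply: lift Ht'.
Qed.

Theorem mainTheorem3 (V : finType) (N : net V) :
  is_network N -> binary N -> orchard N ->
  exists t : V -> R,
    HGT_consistent N t /\
    (forall a b : V, a \in nodes N -> b \in nodes N -> a <> b -> t a = t b ->
       (narc N a b /\ is_tree_node N a /\ is_ret N b) \/
       (narc N b a /\ is_tree_node N b /\ is_ret N a)).
Proof.
move=> HN Hbin [S [tree _]].
have [t Ht] := reduce_seq_tight_labelling (conj HN Hbin) tree.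
by exists t; apply: tight_labelling_HGT.
Qed.
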